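(* Let $R$ be a tournament on $[n]=\{1,\dots,n\}$. Then there is a positive integer $M$ such that for every integer $N\ge M$ there exist independent, proper $N$-sided dice $D_1,\dots,D_n$ such that for all $i,j\in[n]$, $$P(D_i>D_j)>\tfrac12 \iff (i,j)\in R .$$
   Context: A tournament on a set $I$ is a subset $R\subset I\times I$ such that for every pair of distinct $i,j\in I$ exactly one of $(i,j),(j,i)$ lies in $R$, and $R$ contains no pair $(i,i)$. An $N$-sided die is a random variable on a sample space of $N$ equally likely outcomes (faces) taking positive integer values; it is proper if all its values lie in $\{1,\dots,N\}$ and the sum of the values over the $N$ faces is $N(N+1)/2$ (equivalently its expected value is $(N+1)/2$). Independent dice means the corresponding random variables are independent. *)

From mathcomp Require Import all_boot all_order.
Set Implicit Arguments.
Unset Strict Implicit.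
Unset Printing Implicit Defensive.

Definition is_tournament (I : finType) (R : rel I) : Prop :=
  (forall i, ~~ R i i) /\
  (forall i j, i != j -> (R i j (+) R j i)).

Definition die (N : nat) := {ffun 'I_N -> nat}.

Definition proper_die (N : nat) (D : die N) : Prop :=
  (forall f, 1 <= D f <= N) /\ (\sum_(f < N) D f = N * N.+1 %/ 2).

(* Number of outcomes (a, b) of the product sample space 'I_N * 'I_N (two
   independent rolls, N^2 equally likely outcomes) with D a > E b.
   For independent dice, P(D > E) = wins D E / N^2. *)
Definition wins (N : nat) (D E : die N) : nat :=
  #|[set ab : 'I_N * 'I_N | E ab.2 < D ab.1]|.

Definition beats (N : nat) (D E : die N) : bool :=
  N ^ 2 < 2 * wins D E.

(* It suffices to realise R by coordinate vectors x_u of length K, with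
   entries in [0, 2T] and mean T, such that x_a exceeds x_b in more than half of the
   coordinates iff R a b.  This is a McGarvey-type construction: every ordered pair (i, j)
   gets two faces on which candidate u shows u and n+1-u, so that any two candidates split
   them 1-1, except that on an edge (i, j) of R the tail shows (n+1, 1) and the head (n, 0),
   so the tail wins both.  On the pair (u, u) candidate u alone shows (big, 0) instead,
   which still splits 1-1 and is chosen to make all sums equal.
   A vector is then blown up to a proper N-sided die: with P the largest multiple of K G
   (G = 2T+1) not exceeding N, the faces below P are cut into blocks of G faces, block c showing
   G c + 1 + x (c mod K) throughout, and face f >= P shows f + 1.  As x has mean T, every
   period of K blocks keeps the sum of the standard die, and for two such dice
   2 wins - N^2 = (2 W - K) q G^2 - (N - P), where W counts the coordinates won and
   N - P < K G <= q G^2; so the first die beats the second iff 2 W > K. *)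

From mathcomp Require Import all_boot all_order zify.
Set Implicit Arguments.
Unset Strict Implicit.
Unset Printing Implicit Defensive.

Lemma big_nat_blocks (h : nat -> nat) m k :
  \sum_(0 <= a < m * k) h a = \sum_(0 <= c < m) \sum_(0 <= s < k) h (c * k + s).
Proof.
rewrite big_nat_mul; apply: eq_bigr => c _.
rewrite -{1}(add0n (c * k)) big_addn mulSn addnK.
by apply: eq_bigr => s _; rewrite addnC.
Qed.

Lemma sum_divmod (h : nat -> nat -> nat) m k :
  \sum_(0 <= t < m * k) h (t %/ k) (t %% k) =
  \sum_(0 <= i < m) \sum_(0 <= j < k) h i j.
Proof.
rewrite big_nat_blocks; apply: eq_big_nat => i _; apply: eq_big_nat => j /andP[_ ltjk].
have k_gt0 : 0 < k by apply: leq_ltn_trans ltjk.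
by rewrite divnMDl // divn_small // addn0 modnMDl modn_small.
Qed.

Lemma sum_periodic (h : nat -> nat) q k :
  \sum_(0 <= c < q * k) h (c %% k) = q * \sum_(0 <= t < k) h t.
Proof. by rewrite (sum_divmod (fun _ t => h t)) sum_nat_const_nat subn0. Qed.

Lemma double_sum_id m : 2 * \sum_(0 <= i < m) i + m = m * m.
Proof.
elim: m => [|m IH]; first by rewrite big_geq.
by rewrite big_nat_recr //= mulnDr; lia.
Qed.

Lemma sum_id_odd T : \sum_(0 <= s < T.*2.+1) s = T.*2.+1 * T.
Proof. by have := double_sum_id T.*2.+1; lia. Qed.

Lemma sum_succ N : \sum_(0 <= f < N) f.+1 = N * N.+1 %/ 2.
Proof.
have := double_sum_id N.+1; rewrite big_nat_recl //= add0n => sum2.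
by rewrite (_ : N * N.+1 = 2 * \sum_(0 <= f < N) f.+1) ?mulKn //; lia.
Qed.

Lemma wins_ffun N (f g : nat -> nat) :
  wins [ffun a : 'I_N => f a] [ffun b : 'I_N => g b] =
  \sum_(0 <= a < N) \sum_(0 <= b < N) (g b < f a).
Proof.
rewrite /wins -sum1_card big_mkcond /= big_mkord.
rewrite (eq_bigr (fun a : 'I_N => \sum_(b < N) (g b < f a))) => [|a _]; last by rewrite big_mkord.
by rewrite pair_big /=; apply: eq_bigr => -[a b] _; rewrite inE !ffunE; case: (_ < _).
Qed.

Definition coord_wins (K : nat) (x y : nat -> nat) : nat :=
  \sum_(0 <= t < K) (y t < x t).

Lemma coord_wins_sym_le K x y : coord_wins K x y + coord_wins K y x <= K.
Proof.
rewrite -big_split /= -[X in _ <= X]subn0 -[X in _ <= X]muln1 -sum_nat_const_nat.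
by apply: leq_sum => t _; case: ltngtP.
Qed.

Lemma count_lt_blocks G (z : nat -> nat) m c e :
  (forall c', z c' < G) -> c < m -> e < G ->
  \sum_(0 <= c' < m) (G * c' + z c' < G * c + e) = c + (z c < e).
Proof.
move=> zG ltcm lteG.
have below : \sum_(0 <= c' < c) (G * c' + z c' < G * c + e) = c.
  rewrite (eq_big_nat _ _ (F2 := fun=> 1)) => [|c' /andP[_ ltc'c]].
    by rewrite sum_nat_const_nat subn0 muln1.
  by rewrite (_ : G * c' + z c' < G * c + e) //; have := zG c'; nia.
have above : \sum_(c.+1 <= c' < m) (G * c' + z c' < G * c + e) = 0.
  rewrite big_nat big1 // => c' /andP[ltcc' _].
  by rewrite ltnNge (_ : G * c + e <= G * c' + z c') //; have := zG c'; nia.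
by rewrite (big_cat_nat (leq0n c) (ltnW ltcm)) (big_ltn ltcm) /= below above addn0 ltn_add2l.
Qed.

Lemma ltn_scaled_gap m w K W Y r : r < Y -> w + K * Y + r = m + W * Y ->
  (m < w) = (K < W).
Proof.
move=> ltrY eqw; apply/idP/idP => [ltmw | ltKW].
- rewrite ltnNge; apply/negP => leWK.
  have : W * Y <= K * Y by rewrite leq_mul2r leWK orbT.
  lia.
- have : K.+1 * Y <= W * Y by rewrite leq_mul2r ltKW orbT.
  rewrite mulSn; lia.
Qed.

Section Blowup.
Variables K T N : nat.
Let G := T.*2.+1.
Let q := N %/ (K * G).
Let P := q * K * G.

Definition blowup (x : nat -> nat) (f : nat) : nat :=
  if f < P then G * (f %/ G) + 1 + x (f %/ G %% K) else f.+1.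

Definition blowup_die (x : nat -> nat) : die N := [ffun f : 'I_N => blowup x f].

Let P_le_N : P <= N.
Proof. by rewrite /P -mulnA leq_divM. Qed.

Let block_le_P c : c < q * K -> G + G * c <= P.
Proof. by move=> ltc; rewrite /P -mulnS mulnC leq_mul2r ltc orbT. Qed.

Lemma blowup_block x c s : c < q * K -> s < G ->
  blowup x (c * G + s) = G * c + 1 + x (c %% K).
Proof.
move=> ltc lts; have ltP : c * G + s < P by rewrite /P; nia.
by rewrite /blowup ltP divnMDl // divn_small // addn0.
Qed.

Lemma blowup_tail x f : P <= f -> blowup x f = f.+1.
Proof. by rewrite /blowup ltnNge => ->. Qed.

Lemma sum_blowup_blocks x (h : nat -> nat) :
  \sum_(0 <= f < P) h (blowup x f) = G * \sum_(0 <= c < q * K) h (G * c + 1 + x (c %% K)).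
Proof.
rewrite /P big_nat_blocks big_distrr; apply: eq_big_nat => c /andP[_ ltc] /=.
rewrite (eq_big_nat _ _ (F2 := fun=> h (G * c + 1 + x (c %% K)))) => [|s /andP[_ lts]].
  by rewrite sum_nat_const_nat subn0.
by rewrite blowup_block.
Qed.

Section Bounded.
Variables x y : nat -> nat.
Hypothesis x_le : forall t, x t <= T.*2.
Hypothesis y_le : forall t, y t <= T.*2.

Let x_lt_G t : x t < G. Proof. exact: x_le. Qed.
Let y_lt_G t : y t < G. Proof. exact: y_le. Qed.

Lemma blowup_bounds f : f < N -> 0 < blowup x f <= N.
Proof.
rewrite /blowup; case: ifP => [ltfP _ | _ ltfN]; last by [].
have := @block_le_P (f %/ G); rewrite ltn_divLR // => /(_ ltfP).
have := x_lt_G (f %/ G %% K); have := P_le_N.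
move: (f %/ G) => a; move: (x (a %% K)) => v; lia.
Qed.

Lemma blowup_sum : \sum_(0 <= t < K) x t = K * T ->
  \sum_(0 <= f < N) blowup x f = \sum_(0 <= f < N) f.+1.
Proof.
move=> sum_x; rewrite !(big_cat_nat (leq0n P) P_le_N) /=; congr (_ + _); last first.
  by apply: eq_big_nat => f /andP[leP _]; rewrite blowup_tail.
rewrite (sum_blowup_blocks x id) big_split sum_periodic sum_x /P big_nat_blocks /=.
have block_sum c : \sum_(0 <= s < G) (c * G + s).+1 = G * (c * G).+1 + G * T.
  rewrite (eq_bigr (fun s => (c * G).+1 + s)) => [|s _]; last by rewrite addSn.
  by rewrite big_split sum_nat_const_nat subn0 sum_id_odd mulnC.
rewrite (eq_bigr _ (fun c _ => block_sum c)).
rewrite [RHS]big_split /= sum_nat_const_nat subn0 mulnDr big_distrr /=.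
congr (_ + _); last by lia.
by apply: eq_bigr => c _; rewrite addn1 [G * c]mulnC.
Qed.

Lemma blowup_proper : \sum_(0 <= t < K) x t = K * T -> proper_die (blowup_die x).
Proof.
move=> sum_x; split=> [f | ]; first by rewrite ffunE; apply: blowup_bounds.
rewrite (eq_bigr (fun f : 'I_N => blowup x f)) => [|f _]; last by rewrite ffunE.
by rewrite -(big_mkord xpredT (blowup x)) blowup_sum // sum_succ.
Qed.

Lemma count_below_block c e : c < q * K -> e < G ->
  \sum_(0 <= b < N) (blowup y b < G * c + 1 + e) = G * c + G * (y (c %% K) < e).
Proof.
move=> ltc lte; have := block_le_P ltc => le_block_P.
have tail0 : \sum_(P <= b < N) (blowup y b < G * c + 1 + e) = 0.
  rewrite big_nat big1 // => b /andP[leP _].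
  by rewrite blowup_tail // ltnNge (_ : G * c + 1 + e <= b.+1) //; lia.
rewrite (big_cat_nat (leq0n P) P_le_N) /= tail0 addn0.
rewrite (sum_blowup_blocks y (fun v => (v < G * c + 1 + e) : nat)).
rewrite (eq_bigr (fun c' => (G * c' + y (c' %% K) < G * c + e) : nat)) => [|c' _]; last first.
  by rewrite addnAC [G * c + 1 + e]addnAC ltn_add2r.
by rewrite (count_lt_blocks (z := fun c' => y (c' %% K))) // mulnDr.
Qed.

Lemma count_below_tail a : P <= a -> a < N ->
  \sum_(0 <= b < N) (blowup y b < a.+1) = a.
Proof.
move=> leP ltaN.
have blocks : \sum_(0 <= b < P) (blowup y b < a.+1) = P.
  rewrite (sum_blowup_blocks y (fun v => (v < a.+1) : nat)).
  rewrite (eq_big_nat _ _ (F2 := fun=> 1)) => [|c /andP[_ ltc]].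
    by rewrite sum_nat_const_nat subn0 muln1 /P mulnC.
  by have := block_le_P ltc; have := y_lt_G (c %% K); rewrite ltnS; lia.
have tail : \sum_(P <= b < N) (blowup y b < a.+1) = a - P.
  rewrite (big_cat_nat leP (ltnW ltaN)) /= addnC big_nat big1 ?add0n => [|b /andP[leb _]].
    rewrite (eq_big_nat _ _ (F2 := fun=> 1)) => [|b /andP[leb ltb]].
      by rewrite sum_nat_const_nat muln1.
    by rewrite blowup_tail // ltnS ltb.
  by rewrite blowup_tail ?(leq_trans leP) // ltnS ltnNge leb.
by rewrite (big_cat_nat (leq0n P) P_le_N) /= blocks tail subnKC.
Qed.

Lemma blowup_wins :
  \sum_(0 <= a < N) \sum_(0 <= b < N) (blowup y b < blowup x a) =
  G * G * \sum_(0 <= c < q * K) c + G * G * (q * coord_wins K x y) + \sum_(P <= a < N) a.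
Proof.
rewrite (big_cat_nat (leq0n P) P_le_N) /=; congr (_ + _); last first.
  by apply: eq_big_nat => a /andP[leP ltaN]; rewrite blowup_tail // count_below_tail.
rewrite (sum_blowup_blocks x (fun v => \sum_(0 <= b < N) (blowup y b < v))).
rewrite (eq_big_nat _ _ (F2 := fun c => G * c + G * (y (c %% K) < x (c %% K)))).
  rewrite big_split /= -!big_distrr /= (sum_periodic (fun t => (y t < x t) : nat)).
  by rewrite mulnDr !mulnA.
by move=> c /andP[_ ltc]; rewrite count_below_block.
Qed.

Lemma double_blowup_wins :
  2 * \sum_(0 <= a < N) \sum_(0 <= b < N) (blowup y b < blowup x a) +
    K * (q * G * G) + (N - P) = N * N + 2 * coord_wins K x y * (q * G * G).
Proof.
have sumC := double_sum_id (q * K).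
have sumN := double_sum_id N; rewrite (big_cat_nat (leq0n P) P_le_N) /= in sumN.
have sumP := double_sum_id P.
have sumC' := congr1 (muln (G * G)) sumC.
rewrite blowup_wins; move: P_le_N sumN sumP sumC'; rewrite /P; lia.
Qed.

End Bounded.

Lemma blowup_beats x y : (forall t, x t <= T.*2) -> (forall t, y t <= T.*2) ->
  0 < K -> K * K * G <= N ->
  beats (blowup_die x) (blowup_die y) = (K < 2 * coord_wins K x y).
Proof.
move=> x_le y_le K_gt0 leN; rewrite /beats /blowup_die wins_ffun -mulnn.
apply: ltn_scaled_gap (double_blowup_wins x_le y_le).
have KG_gt0 : 0 < K * G by rewrite muln_gt0 K_gt0.
have leKq : K <= q by rewrite /q leq_divRL // mulnA.
have : N - P < K * G by rewrite /P -mulnA {1}(divn_eq N (K * G)) -/q addKn ltn_pmod.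
have : K * G <= q * G by rewrite leq_mul2r leKq orbT.
have : q * G <= q * G * G by rewrite leq_pmulr.
lia.
Qed.

End Blowup.

Lemma sum_delta (F : nat -> nat) u m : u < m ->
  \sum_(0 <= i < m) (if i == u then F i else 0) = F u.
Proof. by move=> ltum; rewrite -big_mkcond big_nat1_eq /= ltum. Qed.

Lemma sum_delta2 c a b m : a < m -> b < m ->
  \sum_(0 <= i < m) \sum_(0 <= j < m) (if (i == a) && (j == b) then c else 0) = c.
Proof.
move=> ltam ltbm; rewrite -[RHS](sum_delta (fun=> c) ltam).
apply: eq_bigr => i _; case: (i == a); first exact: sum_delta.
by rewrite big1.
Qed.

Lemma sum_bit (F : nat -> nat) : \sum_(0 <= s < 2) F s = F 0 + F 1.
Proof. by rewrite big_ltn // big_ltn // big_geq // addn0. Qed.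

Section McGarvey.
Variables (n : nat) (R : rel nat).
Hypothesis R_asym : forall a b, R a b -> ~~ R b a.

Definition mcgarvey_size := n * n * 2.
Let K := mcgarvey_size.
Let S := K * n.+2.
Definition mcgarvey_mean := S + n.+2.

Definition ballot (u i j s : nat) : nat :=
  if (i == u) && (j == u) then 0
  else if R i j && (u == i) then (if s == 0 then n.+1 else 1)
  else if R i j && (u == j) then (if s == 0 then n else 0)
  else if s == 0 then u else n.+1 - u.

Let ballot_sum u := \sum_(0 <= i < n) \sum_(0 <= j < n) \sum_(0 <= s < 2) ballot u i j s.

Definition vote (u i j s : nat) : nat :=
  ballot u i j s + (if [&& i == u, j == u & s == 0] then S - ballot_sum u else 0).

Definition mcgarvey (u t : nat) : nat := S + vote u (t %/ 2 %/ n) (t %/ 2 %% n) (t %% 2).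

Lemma sum_mcgarvey_faces (h : nat -> nat -> nat -> nat) :
  \sum_(0 <= t < K) h (t %/ 2 %/ n) (t %/ 2 %% n) (t %% 2) =
  \sum_(0 <= i < n) \sum_(0 <= j < n) \sum_(0 <= s < 2) h i j s.
Proof.
rewrite (sum_divmod (fun p s => h (p %/ n) (p %% n) s)).
exact: (sum_divmod (fun i j => \sum_(0 <= s < 2) h i j s)).
Qed.

Section Candidate.
Variable u : nat.
Hypothesis ltun : u < n.

Let ballot_le i j s : ballot u i j s <= n.+1.
Proof. by rewrite /ballot; repeat case: ifP => _; lia. Qed.

Let ballot_sum_le : ballot_sum u <= K * n.+1.
Proof.
apply: (@leq_trans (\sum_(0 <= i < n) \sum_(0 <= j < n) \sum_(0 <= s < 2) n.+1)).
  by do 3!(apply: leq_sum => ? _).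
by rewrite !sum_nat_const_nat !subn0 /K /mcgarvey_size; lia.
Qed.

Lemma absorber_ge : n <= S - ballot_sum u.
Proof. by have := ballot_sum_le; rewrite /S /K /mcgarvey_size; nia. Qed.

Lemma mcgarvey_le t : mcgarvey u t <= mcgarvey_mean.*2.
Proof.
rewrite /mcgarvey /vote /mcgarvey_mean; have := ballot_le (t %/ 2 %/ n) (t %/ 2 %% n) (t %% 2).
by case: ifP => _; lia.
Qed.

Lemma mcgarvey_sum : \sum_(0 <= t < K) mcgarvey u t = K * mcgarvey_mean.
Proof.
rewrite big_split sum_nat_const_nat subn0 /= (sum_mcgarvey_faces (vote u)) /vote.
under eq_bigr => i _ do under eq_bigr => j _ do rewrite big_split /=.
under eq_bigr => i _ do rewrite big_split /=.
rewrite big_split /= -/(ballot_sum u).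
have -> : \sum_(0 <= i < n) \sum_(0 <= j < n) \sum_(0 <= s < 2)
    (if [&& i == u, j == u & s == 0] then S - ballot_sum u else 0) = S - ballot_sum u.
  rewrite -[RHS](sum_delta2 _ ltun ltun); apply: eq_bigr => i _; apply: eq_bigr => j _.
  by rewrite sum_bit; case: (i == u); case: (j == u); rewrite /= ?addn0.
have := ballot_sum_le; rewrite /mcgarvey_mean /S; nia.
Qed.
End Candidate.

Lemma vote_pair_wins a b i j : a < n -> b < n -> a != b -> R a b ->
  1 + (if (i == a) && (j == b) then 1 else 0) <=
  (vote b i j 0 < vote a i j 0) + (vote b i j 1 < vote a i j 1).
Proof.
move=> lta ltb neab Rab; have := absorber_ge lta; have := absorber_ge ltb.
have nRba := R_asym Rab; rewrite /vote /ballot /= !andbT !andbF !addn0.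
(* Only an edge (b, a) would leave a without a win, and asymmetry excludes it. *)
case: (boolP ((i == a) && (j == b))) => [/andP[/eqP-> /eqP->] | ne_ab].
  by rewrite Rab !eqxx (eq_sym b a) (negbTE neab) /=; lia.
case: (boolP ((i == b) && (j == a))) => [/andP[/eqP-> /eqP->] | ne_ba].
  by rewrite (negbTE nRba) !eqxx (eq_sym b a) (negbTE neab) /=; lia.
by move: ne_ab ne_ba; case: (R i j) => /=; repeat (case: ifP => /=); lia.
Qed.

Lemma mcgarvey_wins a b : a < n -> b < n -> R a b ->
  K < 2 * coord_wins K (mcgarvey a) (mcgarvey b).
Proof.
move=> lta ltb Rab; have neab : a != b.
  by apply: contraTneq Rab => ->; apply/negP => Rbb; move: (R_asym Rbb); rewrite Rbb.
rewrite /coord_wins; under eq_bigr => t _ do rewrite ltn_add2l.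
rewrite (sum_mcgarvey_faces (fun i j s => (vote b i j s < vote a i j s) : nat)).
have : \sum_(0 <= i < n) \sum_(0 <= j < n) (1 + (if (i == a) && (j == b) then 1 else 0)) <=
       \sum_(0 <= i < n) \sum_(0 <= j < n) \sum_(0 <= s < 2) (vote b i j s < vote a i j s).
  by do 2!(apply: leq_sum => ? _); rewrite sum_bit; exact: vote_pair_wins.
under eq_bigr => i _ do rewrite big_split /=.
rewrite big_split /= sum_delta2 // !sum_nat_const_nat !subn0 /K /mcgarvey_size; lia.
Qed.
End McGarvey.

Lemma tournament_asym (I : finType) (R : rel I) :
  is_tournament R -> forall i j, R i j -> ~~ R j i.
Proof.
move=> [irrR xorR] i j Rij; have [eij | neij] := eqVneq i j.
  by move: Rij; rewrite eij (negbTE (irrR j)).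
by move: (xorR _ _ neij); rewrite Rij.
Qed.

Lemma tournament_majority (I : finType) (R : rel I) (W : I -> I -> nat) K :
  is_tournament R -> (forall i j, W i j + W j i <= K) ->
  (forall i j, R i j -> K < 2 * W i j) -> forall i j, (K < 2 * W i j) = R i j.
Proof.
move=> [irrR xorR] W_le W_maj i j; apply/idP/idP => [ltK | /W_maj //].
apply/negPn/negP => nRij; have [eij | neij] := eqVneq i j.
  by move: ltK (W_le j j); rewrite eij; lia.
have Rji : R j i by move: (xorR _ _ neij); rewrite (negbTE nRij).
by move: ltK (W_maj _ _ Rji) (W_le i j); lia.
Qed.

Theorem theorem1p1 (n : nat) (R : rel 'I_n) :
  is_tournament R ->
  exists M : nat, 0 < M /\
    forall N : nat, M <= N ->
      exists D : 'I_n -> die N,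
        (forall i, proper_die (D i)) /\
        (forall i j : 'I_n, beats (D i) (D j) <-> R i j).
Proof.
case: n R => [|m] R tourR.
  by exists 1; split=> // N _; exists (fun=> [ffun=> 1]); split; case.
pose Rn a b := R (inord a) (inord b).
have Rn_asym a b : Rn a b -> ~~ Rn b a by apply: tournament_asym.
pose K := mcgarvey_size m.+1; pose T := mcgarvey_mean m.+1; pose x := mcgarvey m.+1 Rn.
have K_gt0 : 0 < K by rewrite !muln_gt0.
exists (K * K * T.*2.+1); split => [|N leN]; first by rewrite !muln_gt0.
have majority (i j : 'I_m.+1) : (K < 2 * coord_wins K (x i) (x j)) = R i j.
  apply: (@tournament_majority _ R (fun i j => coord_wins K (x i) (x j)) K tourR).
    by move=> i' j'; apply: coord_wins_sym_le.
  by move=> i' j' Rij; apply: mcgarvey_wins; rewrite ?ltn_ord // /Rn !inord_val.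
exists (fun i => blowup_die K T N (x i)); split => [i | i j].
  by apply: blowup_proper => [t|]; [apply: mcgarvey_le | apply: mcgarvey_sum].
by rewrite blowup_beats ?majority // => t; apply: mcgarvey_le.
Qed.
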